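(* Let $(M,f,g)$ be an $(m,n)$-hypermodule over a commutative Krasner $(m,n)$-hyperring $(R,f',g')$ with scalar identity $1$, let $Q$ be a proper subhypermodule of $M$ and put $S=M\setminus Q$. Then $Q$ is an $n$-ary classical prime subhypermodule of $M$ if and only if the following holds: for all hyperideals $I_1,\dots,I_{n-1}$ of $R$ and all subhypermodules $N_1,N_2$ of $M$, if $f(N_1,g(I_i,1^{(n-2)},N_2),0^{(m-2)})\cap S\neq\varnothing$ for every $1\le i\le n-1$, then $f(N_1,g(I_1^{n-1},N_2),0^{(m-2)})\cap S\neq\varnothing$.
   Context: A commutative Krasner $(m,n)$-hyperring with scalar identity $1$ is a triple $(R,f',g')$ where $(R,f')$ is a canonical $m$-ary hypergroup with zero $0$, $(R,g')$ is a commutative $n$-ary semigroup, $g'$ is distributive over $f'$, $0$ is a zero element for $g'$, and $g'(x,1^{(n-1)})=x$ for all $x$. Notation: $x_i^j$ denotes the sequence $x_i,\dots,x_j$ and $x^{(k)}$ denotes $x$ repeated $k$ times. A hyperideal $I$ of $R$ is a nonempty subset such that $(I,f')$ is an $m$-ary subhypergroup and $g'(x_1^{i-1},I,x_{i+1}^n)\subseteq I$ for all $x$'s and $i$. An $(m,n)$-hypermodule over $R$ is a triple $(M,f,g)$ where $(M,f)$ is a canonical $m$-ary hypergroup with zero $0$ and $g:R^{n-1}\times M\to P^*(M)$ satisfies: $g(r_1^{n-1},f(x_1^m))=f(g(r_1^{n-1},x_1),\dots,g(r_1^{n-1},x_m))$; $g(r_1^{i-1},f'(s_1^m),r_{i+1}^{n-1},x)=f(g(r_1^{i-1},s_1,r_{i+1}^{n-1},x),\dots,g(r_1^{i-1},s_m,r_{i+1}^{n-1},x))$;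 $g(r_1^{i-1},g'(r_i^{i+n-1}),r_{i+n}^{2n-2},x)=g(r_1^{n-1},g(r_n^{2n-2},x))$; and $g(r_1^{i-1},0,r_{i+1}^{n-1},x)=\{0\}$. Also $g(1^{(n-1)},a)=\{a\}$ and $g(r_1^{n-1},0)=\{0\}$. For subsets, $g(A_1,\dots,A_{n-1},X)=\bigcup\{g(r_1^{n-1},x): r_i\in A_i, x\in X\}$ and similarly $f$ applied to subsets is the union over elements. A subhypermodule of $M$ is a nonempty $N\subseteq M$ with $(N,f)$ an $m$-ary subhypergroup and $g(R^{(n-1)},N)\subseteq N$. A proper subhypermodule $Q$ of $M$ is $n$-ary classical prime if for all $r_1^{n-1}\in R$ and $a\in M$, $g(r_1^{n-1},a)\subseteq Q$ implies $g(r_i,1^{(n-2)},a)\subseteq Q$ for some $1\le i\le n-1$. *)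

From Stdlib Require Import Permutation.
From mathcomp Require Import all_boot.
Set Implicit Arguments. Unset Strict Implicit. Unset Printing Implicit Defensive.

(* A hyperoperation of arity k on T: applied to a list of (exactly k) arguments,
   it returns a subset of T (represented as a predicate). *)
Definition hop (T : Type) := seq T -> T -> Prop.

Definition sing {T : Type} (x : T) : T -> Prop := fun y => y = x.
Definition seteq {T : Type} (A B : T -> Prop) := forall z, A z <-> B z.
Definition subset {T : Type} (A B : T -> Prop) := forall z, A z -> B z.

Fixpoint all_in {T : Type} (As : seq (T -> Prop)) (xs : seq T) : Prop :=
  match As, xs with
  | [::], [::] => True
  | A :: As', x :: xs' => A x /\ all_in As' xs'
  | _, _ => False
  end.

Definition hlift {T : Type} (f : hop T) (As : seq (T -> Prop)) : T -> Prop :=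
  fun z => exists xs, all_in As xs /\ f xs z.

Definition is_inv {H : Type} (m : nat) (f : hop H) (e x y : H) : Prop :=
  f (x :: y :: nseq (m - 2) e) e.

(* Canonical (commutative) m-ary hypergroup with zero e.  Indices are 0-based. *)
Record canonical_hypergroup (m : nat) (H : Type) (f : hop H) (e : H) : Prop := {
  chg_nonempty : forall xs, size xs = m -> exists z, f xs z;
  chg_assoc : forall (xs : seq H) i j, size xs = (2 * m - 1)%N -> i < m -> j < m ->
     seteq (hlift f (map sing (take i xs) ++ f (take m (drop i xs)) :: map sing (drop (i + m) xs)))
           (hlift f (map sing (take j xs) ++ f (take m (drop j xs)) :: map sing (drop (j + m) xs)));
  chg_repr : forall (xs : seq H) i, size xs = m -> i < m ->
     seteq (hlift f (map sing (take i xs) ++ (fun _ => True) :: map sing (drop i.+1 xs)))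
           (fun _ => True);
  chg_comm : forall xs ys, size xs = m -> Permutation xs ys -> seteq (f xs) (f ys);
  chg_zero : forall x, seteq (f (x :: nseq (m - 1) e)) (sing x);
  chg_zero_uniq : forall e', (forall x, seteq (f (x :: nseq (m - 1) e')) (sing x)) -> e' = e;
  chg_inv : forall x, exists! y, is_inv m f e x y;
  (* x_0 \in f(x_1^m) implies x_i \in f(-x_{i-1},...,-x_1,x_0,-x_{i+1},...,-x_m) *)
  chg_rev : forall (xs ys : seq H) x0 i, size xs = m -> size ys = m -> i < m ->
     (forall k, k < m -> is_inv m f e (nth e xs k) (nth e ys k)) -> f xs x0 ->
     f (rev (take i ys) ++ x0 :: drop i.+1 ys) (nth e xs i) }.

Record krasner_hyperring (m n : nat) (R : Type) (f' : hop R) (g' : seq R -> R)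
    (z o : R) : Prop := {
  kh_add : canonical_hypergroup m f' z;
  kh_assoc : forall (xs : seq R) i j, size xs = (2 * n - 1)%N -> i < n -> j < n ->
     g' (take i xs ++ g' (take n (drop i xs)) :: drop (i + n) xs)
     = g' (take j xs ++ g' (take n (drop j xs)) :: drop (j + n) xs);
  kh_comm : forall xs ys, size xs = n -> Permutation xs ys -> g' xs = g' ys;
  kh_distr : forall (pre post ys : seq R), size (pre ++ post) = (n - 1)%N -> size ys = m ->
     seteq (fun w => exists y, f' ys y /\ w = g' (pre ++ y :: post))
           (f' (map (fun y => g' (pre ++ y :: post)) ys));
  kh_zero : forall (pre post : seq R), size (pre ++ post) = (n - 1)%N ->
     g' (pre ++ z :: post) = z;
  kh_one : forall x, g' (x :: nseq (n - 1) o) = x }.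

Record hypermodule (m n : nat) (R : Type) (f' : hop R) (g' : seq R -> R) (zR oR : R)
    (M : Type) (f : hop M) (g : seq R -> M -> M -> Prop) (zM : M) : Prop := {
  hm_add : canonical_hypergroup m f zM;
  hm_nonempty : forall rs x, size rs = (n - 1)%N -> exists y, g rs x y;
  hm_distr1 : forall rs xs, size rs = (n - 1)%N -> size xs = m ->
     seteq (fun w => exists y, f xs y /\ g rs y w) (hlift f (map (g rs) xs));
  hm_distr2 : forall (pre post ss : seq R) x, size (pre ++ post) = (n - 2)%N -> size ss = m ->
     seteq (fun w => exists s, f' ss s /\ g (pre ++ s :: post) x w)
           (hlift f (map (fun s => g (pre ++ s :: post) x) ss));
  hm_assoc : forall (rs : seq R) i x, size rs = (2 * n - 2)%N -> i < n - 1 ->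
     seteq (g (take i rs ++ g' (take n (drop i rs)) :: drop (i + n) rs) x)
           (fun w => exists y, g (drop (n - 1) rs) x y /\ g (take (n - 1) rs) y w);
  hm_zero_scalar : forall (pre post : seq R) x, size (pre ++ post) = (n - 2)%N ->
     seteq (g (pre ++ zR :: post) x) (sing zM);
  hm_one : forall a, seteq (g (nseq (n - 1) oR) a) (sing a);
  hm_zero : forall rs, size rs = (n - 1)%N -> seteq (g rs zM) (sing zM) }.

Definition glift (R M : Type) (g : seq R -> M -> M -> Prop) (As : seq (R -> Prop))
    (X : M -> Prop) : M -> Prop :=
  fun w => exists rs x, all_in As rs /\ X x /\ g rs x w.

Definition subhypergroup (m : nat) (T : Type) (f : hop T) (N : T -> Prop) : Prop :=
  (exists x, N x) /\
  (forall xs, all_in (nseq m N) xs -> subset (f xs) N) /\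
  (forall xs i, all_in (nseq m N) xs -> i < m ->
     seteq (hlift f (map sing (take i xs) ++ N :: map sing (drop i.+1 xs))) N).

Definition hyperideal (m n : nat) (R : Type) (f' : hop R) (g' : seq R -> R)
    (I : R -> Prop) : Prop :=
  subhypergroup m f' I /\
  (forall (pre post : seq R) x, size (pre ++ post) = (n - 1)%N -> I x ->
     I (g' (pre ++ x :: post))).

Definition subhypermodule (m n : nat) (R M : Type) (f : hop M)
    (g : seq R -> M -> M -> Prop) (N : M -> Prop) : Prop :=
  subhypergroup m f N /\
  (forall rs x w, size rs = (n - 1)%N -> N x -> g rs x w -> N w).

Definition hproper {M : Type} (Q : M -> Prop) : Prop := exists x, ~ Q x.

Definition classical_prime (m n : nat) (R M : Type) (f : hop M)
    (g : seq R -> M -> M -> Prop) (oR : R) (Q : M -> Prop) : Prop :=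
  subhypermodule m n f g Q /\ hproper Q /\
  (forall rs a, size rs = (n - 1)%N -> subset (g rs a) Q ->
     exists i, i < n - 1 /\ subset (g (nth oR rs i :: nseq (n - 2) oR) a) Q).

From Pilot Require Import Defs.
From Stdlib Require Import Permutation Classical.
From mathcomp Require Import all_boot zify.
Set Implicit Arguments. Unset Strict Implicit. Unset Printing Implicit Defensive.

(* If f(N_1, g(I_1^{n-1}, N_2), 0^{(m-2)}) lay inside Q then, all hyperideals and
   subhypermodules containing 0, both N_1 and g(I_1^{n-1}, N_2) would lie in Q.
   Classical primeness gives prime avoidance: if g(A, B, 1^{(n-3)}, N) is in Q then so
   is g(A, 1^{(n-2)}, N) or g(B, 1^{(n-2)}, N).  Merging the scalar sets two at a time
   into product sets yields an i with g(I_i, 1^{(n-2)}, N_2) in Q, against the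
   hypothesis at i.
   Conversely, if g(r_1^{n-1}, a) is in Q but no g(r_i, 1^{(n-2)}, a) is, apply the
   condition to the principal hyperideals <r_i> = g'(r_i, R, 1^{(n-2)}), N_1 = Q and
   the residual N_2 = (Q : <r_1> ... <r_{n-1}>); it contains a because scalars act on
   M only through their product. *)

Lemma exists_not_subset (T : Type) (X Q : T -> Prop) :
  (exists z, X z /\ ~ Q z) <-> ~ Defs.subset X Q.
Proof.
split=> [[z [Xz nQz]] XQ|nXQ]; first exact: nQz (XQ z Xz).
apply: NNPP => nex; apply: nXQ => z Xz; apply: NNPP => nQz.
by apply: nex; exists z.
Qed.

Section SeqLemmas.
Variable T : Type.
Implicit Types (x : T) (s : seq T) (A : T -> Prop) (As : seq (T -> Prop)).

Lemma Permutation_size s1 s2 : Permutation s1 s2 -> size s1 = size s2.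
Proof. by elim=> //= [x l l' _ -> | l l' l'' _ -> _ ->]. Qed.

Lemma Permutation_rev_seq s : Permutation (rev s) s.
Proof.
elim: s => //= x s IH; rewrite rev_cons -cats1.
apply: Permutation_trans (Permutation_app_tail _ IH) _.
exact/Permutation_sym/Permutation_cons_append.
Qed.

Lemma size_take_cons_drop s i x : i < size s -> size (take i s ++ x :: drop i.+1 s) = size s.
Proof. by move=> lt_i_s; rewrite size_cat /= size_take size_drop lt_i_s; lia. Qed.

Lemma take_drop_cat3 (s1 s2 s3 : seq T) :
  [/\ take (size s1) (s1 ++ s2 ++ s3) = s1, drop (size s1) (s1 ++ s2 ++ s3) = s2 ++ s3,
      take (size s2) (s2 ++ s3) = s2 & drop (size s2) (s2 ++ s3) = s3].
Proof. by rewrite !take_size_cat // !drop_size_cat. Qed.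

Lemma drop_last_nth s j x0 : size s = j.+1 -> drop j s = [:: nth x0 s j].
Proof. by move=> hs; rewrite (drop_nth x0) ?hs // drop_oversize ?hs. Qed.

Lemma Forall_cat A s1 s2 :
  List.Forall A s1 -> List.Forall A s2 -> List.Forall A (s1 ++ s2).
Proof. by elim=> //= x l Ax _ IH ?; constructor; auto. Qed.

Lemma Forall_take A i s : List.Forall A s -> List.Forall A (take i s).
Proof. by elim: s i => [|x s IH] [|i] //= h; inversion h; constructor; auto. Qed.

Lemma Forall_drop A i s : List.Forall A s -> List.Forall A (drop i s).
Proof. by elim: s i => [|x s IH] [|i] //= h; inversion h; auto. Qed.

Lemma Forall_nth A s x0 i : List.Forall A s -> i < size s -> A (nth x0 s i).
Proof. by elim: s i => [|x s IH] [|i] //= h; inversion h; auto. Qed.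

Lemma Forall_nthI A s x0 : (forall i, i < size s -> A (nth x0 s i)) -> List.Forall A s.
Proof.
elim: s => [|x s IH] h; constructor; first exact: (h 0).
by apply: IH => i; apply: (h i.+1).
Qed.

Lemma Forall_nseq A j x : A x -> List.Forall A (nseq j x).
Proof. by move=> Ax; elim: j => //= j IH; constructor. Qed.

Lemma Forall_image_map (U : Type) (F : U -> T) s :
  List.Forall (fun x => exists u, x = F u) s -> exists us, s = map F us.
Proof. by elim=> [|x s' [u ->] _ [us ->]]; [exists [::] | exists (u :: us)]. Qed.

Lemma all_in_size As s : all_in As s -> size s = size As.
Proof. by elim: As s => [|A As IH] [|x s] //= [_ /IH ->]. Qed.

Lemma all_in_cat As1 As2 s1 s2 :
  all_in As1 s1 -> all_in As2 s2 -> all_in (As1 ++ As2) (s1 ++ s2).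
Proof. by elim: As1 s1 => [|A As IH] [|x s] //= [? /IH]; auto. Qed.

Lemma all_in_cat_split As1 As2 s : all_in (As1 ++ As2) s ->
  exists s1 s2, s = s1 ++ s2 /\ all_in As1 s1 /\ all_in As2 s2.
Proof.
elim: As1 s => [|A As IH] s /=; first by exists [::], s.
case: s => [|x s] // [Ax /IH [s1 [s2 [-> [h1 h2]]]]].
by exists (x :: s1), s2.
Qed.

Lemma all_in_map_sing s : all_in (map sing s) s.
Proof. by elim: s => //= x s ->. Qed.

Lemma all_in_map_singE s1 s2 : all_in (map sing s1) s2 -> s2 = s1.
Proof. by elim: s1 s2 => [|y s1 IH] [|x s2] //= [-> /IH ->]. Qed.

Lemma all_in_nseq_const A j x : A x -> all_in (nseq j A) (nseq j x).
Proof. by move=> Ax; elim: j => //= j ->. Qed.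

Lemma all_in_nseq_sing j x : all_in (nseq j (sing x)) (nseq j x).
Proof. exact: (all_in_nseq_const (A := sing x)). Qed.

Lemma all_in_nseq_eq A j s x : (forall y, A y -> y = x) -> all_in (nseq j A) s -> s = nseq j x.
Proof. by move=> hA; elim: j s => [|j IH] [|y s] //= [/hA -> /IH ->]. Qed.

Lemma all_in_nseq_singE j s x : all_in (nseq j (sing x)) s -> s = nseq j x.
Proof. exact: all_in_nseq_eq. Qed.

Lemma all_in_nseqP A j s : all_in (nseq j A) s <-> size s = j /\ List.Forall A s.
Proof.
split; first by elim: j s => [|j IH] [|x s] //= [Ax /IH [-> h]]; split; auto.
by move=> [<-]; elim=> //= x l Ax _ h; split.
Qed.

Lemma all_in_const As A0 x : (forall i, i < size As -> nth A0 As i x) ->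
  all_in As (nseq (size As) x).
Proof.
elim: As => [|A As IH] //= h; split; first exact: (h 0).
by apply: IH => i; apply: (h i.+1).
Qed.

Lemma all_in_take_drop As s j :
  all_in As s -> all_in (take j As) (take j s) /\ all_in (drop j As) (drop j s).
Proof.
elim: As s j => [|A As IH] [|x s] [|j] //= [Ax h]; try by split.
by have [? ?] := IH _ j h; split.
Qed.

Lemma all_in_map_Forall (U : Type) (F : U -> T -> Prop) (P : U -> Prop) (Q : T -> Prop) us s :
  List.Forall P us -> (forall u x, P u -> F u x -> Q x) -> all_in (map F us) s ->
  List.Forall Q s.
Proof.
move=> + hF; elim: us s => [|u us IH] [|x s] //= hP [h1 h2]; inversion hP.
by constructor; [exact: hF h1 | exact: IH].
Qed.

End SeqLemmas.

Section CanonicalHypergroup.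
Variables (H : Type) (p : nat) (f : hop H) (e : H).
Hypothesis HG : canonical_hypergroup p.+2 f e.

Lemma f_perm xs ys z : size xs = p.+2 -> Permutation xs ys -> f xs z -> f ys z.
Proof. by move=> hs hp; exact: (chg_comm HG hs hp z).1. Qed.

Lemma f_zero_r x : f (x :: nseq p.+1 e) x.
Proof. exact/((chg_zero HG x x).2 erefl). Qed.

Lemma f_zero_l x : f (e :: x :: nseq p e) x.
Proof.
apply: (@f_perm (x :: e :: nseq p e) _ _ _ (perm_swap _ _ _) (f_zero_r x)).
by rewrite /= size_nseq.
Qed.

Lemma is_invE x y : is_inv p.+2 f e x y <-> f (x :: y :: nseq p e) e.
Proof. by rewrite /is_inv !subSS subn0. Qed.

Lemma is_inv_sym x y : is_inv p.+2 f e x y -> is_inv p.+2 f e y x.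
Proof.
move=> /is_invE h; apply/is_invE; apply: f_perm (perm_swap _ _ _) h.
by rewrite /= size_nseq.
Qed.

Lemma is_inv_zero : is_inv p.+2 f e e e.
Proof. exact/is_invE/f_zero_r. Qed.

Lemma is_inv_exists x : exists y, is_inv p.+2 f e x y.
Proof. by case: (chg_inv HG x) => y [h _]; exists y. Qed.

Lemma is_inv_uniq x y y' : is_inv p.+2 f e x y -> is_inv p.+2 f e x y' -> y = y'.
Proof. by case: (chg_inv HG x) => y0 [_ hu] /hu <- /hu <-. Qed.

Lemma is_inv_seq_exists xs : exists ys, size ys = size xs /\
  forall i, i < size xs -> is_inv p.+2 f e (nth e xs i) (nth e ys i).
Proof.
elim: xs => [|x xs [ys [hs hys]]]; first by exists [::].
have [y hy] := is_inv_exists x; exists (y :: ys); split; first by rewrite /= hs.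
by case=> [|i] //= /hys.
Qed.

Lemma f_sub_inv a b c v :
  f (a :: b :: nseq p e) c -> is_inv p.+2 f e b v -> f (c :: v :: nseq p e) a.
Proof.
move=> hc /is_invE hv; have [a' ha] := is_inv_exists a.
apply: (chg_rev HG (xs := a :: b :: nseq p e) (ys := a' :: v :: nseq p e) (i := 0));
  rewrite //= ?size_nseq //.
move=> [|[|j]] //= _; first exact/is_invE.
by rewrite nth_nseq if_same; exact: is_inv_zero.
Qed.

Section Subhypergroup.
Variable N : H -> Prop.
Hypothesis f_closed : forall xs, all_in (nseq p.+2 N) xs -> Defs.subset (f xs) N.
Hypothesis inv_closed : forall x y, N x -> is_inv p.+2 f e x y -> N y.

(* Replace the i-th argument by the inverses of all the others and z, take any
   x in f of that list, and move back with the reversibility axiom. *)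
Lemma f_reproductive_in xs i z : all_in (nseq p.+2 N) xs -> i < p.+2 -> N z ->
  exists2 x, N x & f (take i xs ++ x :: drop i.+1 xs) z.
Proof.
move=> /all_in_nseqP [hsz hN] hi Nz.
have hi' : i < size xs by rewrite hsz.
have [ws [hws inv_ws]] := is_inv_seq_exists xs.
set zs := set_nth e ws i z.
have hzs : size zs = p.+2 by rewrite size_set_nth hws hsz; apply/maxn_idPr.
have [x hx] := chg_nonempty HG hzs.
have Nx : N x.
  apply: (f_closed (xs := zs)) hx; apply/all_in_nseqP; split => //.
  apply: (Forall_nthI (x0 := e)) => j hj; rewrite /zs nth_set_nth /=.
  case: eqP => // _; rewrite hzs -hsz in hj.
  exact: inv_closed (Forall_nth e hN hj) (inv_ws j hj).
have [z' hz'] := is_inv_exists z.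
set vs := take i xs ++ z' :: drop i.+1 xs.
have hvs : size vs = p.+2 by rewrite size_take_cons_drop.
have inv_zs j : j < p.+2 -> is_inv p.+2 f e (nth e zs j) (nth e vs j).
  have -> : vs = set_nth e xs i z' by rewrite set_nthE hi'.
  move=> hj; rewrite /zs !nth_set_nth /=.
  by case: eqP => // _; apply/is_inv_sym/inv_ws; rewrite hsz.
have := chg_rev HG hzs hvs hi inv_zs hx.
have take_vs : take i vs = take i xs by rewrite /vs take_size_cat // size_take hi'.
have drop_vs : drop i.+1 vs = drop i.+1 xs.
  by rewrite /vs -cat_rcons drop_size_cat // size_rcons size_take hi'.
rewrite /zs nth_set_nth /= eqxx take_vs drop_vs => hz.
exists x => //; apply: f_perm hz; last exact/Permutation_app_tail/Permutation_rev_seq.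
by rewrite size_cat size_rev -size_cat size_take_cons_drop.
Qed.

Lemma subhypergroup_of_closed x0 : N x0 -> subhypergroup p.+2 f N.
Proof.
move=> Nx0; split; first by exists x0.
split => // xs i hxs hi z; split.
  case=> ws [hws hf]; suff Nws : all_in (nseq p.+2 N) ws by exact: f_closed Nws _ hf.
  have [s1 [s2 [-> [/all_in_map_singE -> h2]]]] := all_in_cat_split hws.
  case: s2 h2 => [|w s2] // [Nw /all_in_map_singE ->].
  have [hsz hN] := (all_in_nseqP _ _ _).1 hxs.
  have hi' : i < size xs by rewrite hsz.
  apply/all_in_nseqP; rewrite size_take_cons_drop // hsz; split => //.
  by apply: Forall_cat; [exact: Forall_take | constructor => //; exact: Forall_drop].
move=> Nz; have [x Nx hx] := f_reproductive_in hxs hi Nz.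
exists (take i xs ++ x :: drop i.+1 xs); split => //.
by apply: all_in_cat; [exact: all_in_map_sing | split => //; exact: all_in_map_sing].
Qed.

End Subhypergroup.
End CanonicalHypergroup.

Section Hypermodule.
Variables (p k : nat) (R : Type) (f' : hop R) (g' : seq R -> R) (zR oR : R).
Variables (M : Type) (f : hop M) (g : seq R -> M -> M -> Prop) (zM : M).
Hypothesis HR : krasner_hyperring p.+2 k.+2 f' g' zR oR.
Hypothesis HM : hypermodule p.+2 k.+2 f' g' zR oR f g zM.
Local Notation ones := (nseq k oR).
Local Notation HGR := (kh_add HR).
Local Notation HGM := (hm_add HM).

Lemma g'_one x : g' (x :: nseq k.+1 oR) = x.
Proof. by have := kh_one HR x; rewrite subSS subn0. Qed.

Lemma g'_zero pre post : size (pre ++ post) = k.+1 -> g' (pre ++ zR :: post) = zR.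
Proof. by move=> h; apply: (kh_zero HR); rewrite h subSS subn0. Qed.

Lemma g'_assoc A B C A' B' C' : A ++ B ++ C = A' ++ B' ++ C' ->
  size B = k.+2 -> size B' = k.+2 -> size A + size C = k.+1 -> size A' + size C' = k.+1 ->
  g' (A ++ g' B :: C) = g' (A' ++ g' B' :: C').
Proof.
move=> E hB hB' hAC hAC'.
have hs : size (A ++ B ++ C) = (2 * k.+2 - 1)%N by rewrite !size_cat hB; lia.
have split_at s1 s2 s3 : size s2 = k.+2 ->
    take (size s1) (s1 ++ s2 ++ s3) ++ g' (take k.+2 (drop (size s1) (s1 ++ s2 ++ s3)))
      :: drop (size s1 + k.+2) (s1 ++ s2 ++ s3) = s1 ++ g' s2 :: s3.
  move=> h2; rewrite addnC -drop_drop.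
  by case: (take_drop_cat3 s1 s2 s3) => -> -> t2 d2; rewrite -h2 t2 d2.
have := kh_assoc HR hs (_ : size A < k.+2) (_ : size A' < k.+2).
rewrite split_at // E split_at //; apply; lia.
Qed.

Lemma g'_distr pre post ys : size (pre ++ post) = k.+1 -> size ys = p.+2 ->
  seteq (fun w => exists y, f' ys y /\ w = g' (pre ++ y :: post))
        (f' (map (fun y => g' (pre ++ y :: post)) ys)).
Proof. by move=> h1 h2; apply: (kh_distr HR) => //; rewrite h1 subSS subn0. Qed.

Lemma g_one a w : g (nseq k.+1 oR) a w <-> w = a.
Proof. by have := hm_one HM a w; rewrite subSS subn0. Qed.

Lemma g_zero_scalar pre post x w :
  size (pre ++ post) = k -> (g (pre ++ zR :: post) x w <-> w = zM).
Proof. by move=> h; apply: (hm_zero_scalar HM); rewrite h !subSS subn0. Qed.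

Lemma g_zero rs w : size rs = k.+1 -> (g rs zM w <-> w = zM).
Proof. by move=> h; apply: (hm_zero HM); rewrite h subSS subn0. Qed.

Lemma g_distr rs xs : size rs = k.+1 -> size xs = p.+2 ->
  seteq (fun w => exists y, f xs y /\ g rs y w) (hlift f (map (g rs) xs)).
Proof. by move=> h1 h2; apply: (hm_distr1 HM) => //; rewrite h1 subSS subn0. Qed.

Lemma g_distr_scalar pre post ss x : size (pre ++ post) = k -> size ss = p.+2 ->
  seteq (fun w => exists s, f' ss s /\ g (pre ++ s :: post) x w)
        (hlift f (map (fun s => g (pre ++ s :: post) x) ss)).
Proof. by move=> h1 h2; apply: (hm_distr2 HM) => //; rewrite h1 !subSS subn0. Qed.

Lemma g_assoc A B C D E x w : A ++ B ++ C = D ++ E -> size D = k.+1 ->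
  size A + size C = k -> size B = k.+2 ->
  (g (A ++ g' B :: C) x w <-> exists y, g E x y /\ g D y w).
Proof.
move=> EL hD hAC hB.
have hs : size (A ++ B ++ C) = (2 * k.+2 - 2)%N by rewrite !size_cat hB; lia.
have hi : size A < k.+2 - 1 by rewrite subSS subn0; lia.
have := hm_assoc HM x hs hi w.
rewrite addnC -drop_drop.
case: (take_drop_cat3 A B C) => -> -> tB dC.
by rewrite subSS subn0 -hB tB dC EL -hD take_size_cat // drop_size_cat.
Qed.

(* [g' (rcons rs oR)] is the product of the n-1 scalars [rs], padded with 1 to the
   arity n of g'. *)
Lemma g_prod rs x w : size rs = k.+1 ->
  (g rs x w <-> g (g' (rcons rs oR) :: ones) x w).
Proof.
move=> hrs; rewrite -[_ :: ones]/([::] ++ _ :: ones).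
rewrite (@g_assoc _ _ _ rs (nseq k.+1 oR)) ?size_rcons ?hrs ?size_nseq ?cat_rcons //.
split=> [h | [y [/g_one -> //]]].
by exists x; split => //; apply/g_one.
Qed.

Lemma g_prod_eq rs rs' x w : size rs = k.+1 -> size rs' = k.+1 ->
  g' (rcons rs oR) = g' (rcons rs' oR) -> (g rs x w <-> g rs' x w).
Proof. by move=> hrs hrs' E; rewrite g_prod // (g_prod _ _ hrs') E. Qed.

Lemma g_perm rs rs' x w : size rs = k.+1 -> Permutation rs rs' -> (g rs x w <-> g rs' x w).
Proof.
move=> hrs hp; have hrs' : size rs' = k.+1 by rewrite -(Permutation_size hp).
apply: g_prod_eq => //; apply: (kh_comm HR); first by rewrite size_rcons hrs.
by rewrite -!cats1; apply: Permutation_app_tail.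
Qed.

Lemma g_mul_head r s rest b w : size rest = k ->
  (g (g' (r :: s :: ones) :: rest) b w <-> exists y, g (r :: rest) b y /\ g (s :: ones) y w).
Proof.
move=> hr.
have -> : g' (r :: s :: ones) = g' (s :: rcons ones r).
  apply: (kh_comm HR); first by rewrite /= size_nseq.
  by rewrite -cats1; exact: (Permutation_cons_append (s :: ones) r).
by apply: (@g_assoc [::]); rewrite /= ?size_rcons ?size_nseq // cat_rcons.
Qed.

Lemma g_merge pre post x y b w : 0 < k -> size pre + size post = k.-1 ->
  (g (pre ++ x :: y :: post) b w <-> g (pre ++ g' (x :: y :: ones) :: oR :: post) b w).
Proof.
move=> hk hs; apply: g_prod_eq; rewrite ?size_cat /=; try lia.
have -> : rcons (pre ++ x :: y :: post) oR
        = rcons pre x ++ g' (y :: nseq k.+1 oR) :: rcons post oR.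
  by rewrite g'_one cat_rcons rcons_cat.
rewrite rcons_cat /=; apply: g'_assoc; rewrite /= ?size_rcons ?size_nseq //; try lia.
rewrite cat_rcons -[oR :: ones ++ _]/(nseq 1 oR ++ ones ++ _).
by rewrite catA -nseqD addnC nseqD -catA.
Qed.

Lemma g1_comm r u b w : (exists y, g (u :: ones) b y /\ g (r :: ones) y w) ->
  exists y, g (r :: ones) b y /\ g (u :: ones) y w.
Proof.
have hones : size ones = k by rewrite size_nseq.
move=> /(g_mul_head _ _ _ _ hones) h; apply/(g_mul_head _ _ _ _ hones).
rewrite (kh_comm HR (xs := r :: u :: ones) (ys := u :: r :: ones)) //=.
  by rewrite size_nseq.
exact: perm_swap.
Qed.

(* The witness u is the inverse of 1 in R: 0 lies in f'(1, u, 0, ..., 0). *)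
Lemma g_neg : exists u, forall b v, is_inv p.+2 f zM b v -> g (u :: ones) b v.
Proof.
have [u /is_invE hu] := is_inv_exists HGR oR; exists u => b v hv.
have hs1 : size ([::] ++ ones) = k by rewrite size_nseq.
have hs2 : size (oR :: u :: nseq p zR) = p.+2 by rewrite /= size_nseq.
have [ws [hws hf]] := (g_distr_scalar b hs1 hs2 zM).1
  (ex_intro _ zR (conj hu ((g_zero_scalar b zM hs1).2 erefl))).
case: ws hws hf => [|w1 [|w2 ws]] //=; try by case.
rewrite map_nseq => -[/g_one -> [hw2 hzs]].
rewrite (all_in_nseq_eq (fun w => (g_zero_scalar b w hs1).1) hzs).
by move=> hf; rewrite (is_inv_uniq HGM hv (proj2 (is_invE _ _ _ _ _) hf)).
Qed.

Section Subhypermodule.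
Variable N : M -> Prop.
Hypothesis HN : subhypermodule p.+2 k.+2 f g N.

Lemma subhypermodule_zero : N zM.
Proof.
case: HN => [[[x Nx] _] g_closed]; apply: (g_closed (zR :: ones) x) => //.
  by rewrite /= size_nseq subSS subn0.
by apply/(g_zero_scalar (pre := [::])); rewrite ?size_nseq.
Qed.

Lemma subhypermodule_g rs x w : size rs = k.+1 -> N x -> g rs x w -> N w.
Proof. by case: HN => _ g_closed hs; apply: g_closed; rewrite hs subSS subn0. Qed.

Lemma subhypermodule_f xs z : all_in (nseq p.+2 N) xs -> f xs z -> N z.
Proof. by case: HN => [[_ [f_closed _]] _] /f_closed; apply. Qed.

Lemma subhypermodule_f2 x y z : N x -> N y -> f (x :: y :: nseq p zM) z -> N z.
Proof.
move=> Nx Ny; apply: subhypermodule_f; do 2!split => //.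
exact/all_in_nseq_const/subhypermodule_zero.
Qed.

Lemma subhypermodule_hlift_f2 X Y z : Defs.subset X N -> Defs.subset Y N ->
  hlift f (X :: Y :: nseq p (sing zM)) z -> N z.
Proof.
move=> XN YN [xs [+ hz]].
case: xs hz => [|x [|y zs]] hz //=; first by case=> _ [].
move=> [Xx [Yy hzs]]; rewrite (all_in_nseq_singE hzs) in hz.
exact: subhypermodule_f2 (XN _ Xx) (YN _ Yy) hz.
Qed.

Lemma g_sub_f rs xs z : size rs = k.+1 -> size xs = p.+2 ->
  List.Forall (fun x => Defs.subset (g rs x) N) xs -> f xs z -> Defs.subset (g rs z) N.
Proof.
move=> hrs hxs xsN hz w hw.
have [ws [hws hf]] := (g_distr hrs hxs w).1 (ex_intro _ z (conj hz hw)).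
apply: subhypermodule_f hf; apply/all_in_nseqP; split.
  by rewrite (all_in_size hws) size_map.
exact: all_in_map_Forall xsN (fun x y h => h y) hws.
Qed.

Lemma g1_sub_inv r b v : Defs.subset (g (r :: ones) b) N ->
  is_inv p.+2 f zM b v -> Defs.subset (g (r :: ones) v) N.
Proof.
move=> bN hv w hw; have [u neg_u] := g_neg.
have [y [hy hw']] := g1_comm (ex_intro _ v (conj (neg_u _ _ hv) hw)).
by apply: subhypermodule_g (bN _ hy) hw'; rewrite /= size_nseq.
Qed.

Lemma g1_sub_f r a b c : f (a :: b :: nseq p zM) c ->
  Defs.subset (g (r :: ones) c) N -> Defs.subset (g (r :: ones) b) N ->
  Defs.subset (g (r :: ones) a) N.
Proof.
move=> hc cN bN; have [v hv] := is_inv_exists HGM b.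
have hr : size (r :: ones) = k.+1 by rewrite /= size_nseq.
apply: g_sub_f (f_sub_inv HGM hc hv); rewrite /= ?size_nseq //.
do 2!constructor => //; first exact: g1_sub_inv bN hv.
by apply: Forall_nseq => w /(g_zero _ hr) ->; exact: subhypermodule_zero.
Qed.

End Subhypermodule.

Definition g1_sub (Q N : M -> Prop) (S : R -> Prop) :=
  forall r x, S r -> N x -> Defs.subset (g (r :: ones) x) Q.

Definition mul_set (A B : R -> Prop) : R -> Prop :=
  fun t => exists x y, A x /\ B y /\ t = g' (x :: y :: ones).

Definition cprime (Q : M -> Prop) := forall rs a, size rs = k.+1 -> Defs.subset (g rs a) Q ->
  exists i, i < k.+1 /\ Defs.subset (g (nth oR rs i :: ones) a) Q.

Lemma glift1_subE Q N S :
  Defs.subset (glift g (S :: nseq k (sing oR)) N) Q <-> g1_sub Q N S.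
Proof.
split=> [h r x Sr Nx w hw | h w [[|r rs] [x [//= [Sr hrs] [Nx]]]]].
  by apply: h; exists (r :: ones), x; do 2!split => //; exact: all_in_nseq_sing.
by rewrite (all_in_nseq_singE hrs); exact: h.
Qed.

Lemma not_g1_sub Q N S : ~ g1_sub Q N S ->
  exists r a, S r /\ N a /\ ~ Defs.subset (g (r :: ones) a) Q.
Proof.
move=> nQ; apply: NNPP => nex; apply: nQ => r a Sr Na.
by apply: NNPP => raQ; apply: nex; exists r, a.
Qed.

Lemma glift_merge_last Q N Ss A B j : j < k -> size Ss = j ->
  Defs.subset (glift g (Ss ++ [:: A, B & nseq (k - j.+1) (sing oR)]) N) Q ->
  Defs.subset (glift g (Ss ++ mul_set A B :: nseq (k - j) (sing oR)) N) Q.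
Proof.
move=> hj hSs h w [ts [b [hts [Nb hw]]]].
have [us [ts2 [Ets [hus hts2]]]] := all_in_cat_split hts; rewrite {}Ets in hw.
case: ts2 hts2 hw => [|t ts2] //= [[x [y [Ax [By Et]]]] hts2].
rewrite Et (all_in_nseq_singE hts2).
have -> : k - j = (k - j.+1).+1 by lia.
move=> /= hw; apply: h; exists (us ++ [:: x, y & nseq (k - j.+1) oR]), b.
split; first by apply: all_in_cat => //=; do 2!split => //; exact: all_in_nseq_sing.
split => //; apply/(@g_merge us (nseq (k - j.+1) oR) x y b w) => //; first by lia.
by rewrite size_nseq (all_in_size hus) hSs; lia.
Qed.

Lemma g1_sub_mul_set Q N A B : 0 < k -> g1_sub Q N (mul_set A B) ->
  forall x y b, A x -> B y -> N b -> Defs.subset (g (x :: y :: nseq k.-1 oR) b) Q.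
Proof.
move=> hk h x y b Ax By Nb w hw.
have := (@g_merge [::] (nseq k.-1 oR) x y b w hk _).1 hw.
rewrite /= -[oR :: nseq k.-1 oR]/(nseq k.-1.+1 oR) prednK // size_nseq => /(_ erefl).
by apply: h => //; exists x, y.
Qed.

Section ClassicalPrime.
Variable Q : M -> Prop.
Hypotheses (HQ : subhypermodule p.+2 k.+2 f g Q) (CP : cprime Q).

Lemma cprime_two_scalars x y c : 0 < k ->
  Defs.subset (g (x :: y :: nseq k.-1 oR) c) Q ->
  Defs.subset (g (x :: ones) c) Q \/ Defs.subset (g (y :: ones) c) Q.
Proof.
move=> hk h; have hs : size (x :: y :: nseq k.-1 oR) = k.+1 by rewrite /= size_nseq; lia.
have [[|[|i]] [hi hsub]] := CP hs h; [by left | by right | left].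
have Qc : Q c by apply: hsub; rewrite /= nth_nseq if_same; exact/g_one.
by move=> w; apply: (subhypermodule_g HQ (x := c)); rewrite /= ?size_nseq.
Qed.

(* Prime avoidance for two sets: if g(r, 1, a) and g(s, 1, b) both leave Q, then
   g(s, 1, a) and g(r, 1, b) lie in Q, and for c in f(a, b, 0, ..., 0) either
   g(r, 1, c) or g(s, 1, c) lies in Q; as a lies in f(c, -b, 0, ..., 0) (and
   symmetrically for b), this puts g(r, 1, a) or g(s, 1, b) back in Q. *)
Lemma cprime_two_sets N A B : subhypermodule p.+2 k.+2 f g N -> 0 < k ->
  (forall x y b, A x -> B y -> N b -> Defs.subset (g (x :: y :: nseq k.-1 oR) b) Q) ->
  g1_sub Q N A \/ g1_sub Q N B.
Proof.
move=> HN hk h; apply: NNPP => /not_or_and [/not_g1_sub nA /not_g1_sub nB].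
have [r [a [Ar [Na raQ]]]] := nA; have [s [b [Bs [Nb sbQ]]]] := nB.
have saQ : Defs.subset (g (s :: ones) a) Q.
  by case: (cprime_two_scalars hk (h _ _ _ Ar Bs Na)) => // /raQ.
have rbQ : Defs.subset (g (r :: ones) b) Q.
  by case: (cprime_two_scalars hk (h _ _ _ Ar Bs Nb)) => // /sbQ.
have hab : size (a :: b :: nseq p zM) = p.+2 by rewrite /= size_nseq.
have [c hc] := chg_nonempty HGM hab.
case: (cprime_two_scalars hk (h _ _ _ Ar Bs (subhypermodule_f2 HN Na Nb hc))) => cQ.
  exact: raQ (g1_sub_f HQ hc cQ rbQ).
exact: sbQ (g1_sub_f HQ (f_perm HGM hab (perm_swap _ _ _) hc) cQ saQ).
Qed.

Lemma cprime_sets N : subhypermodule p.+2 k.+2 f g N -> forall j Ss, j <= k -> size Ss = j.+1 ->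
  Defs.subset (glift g (Ss ++ nseq (k - j) (sing oR)) N) Q ->
  exists i, i <= j /\ g1_sub Q N (nth (fun _ => True) Ss i).
Proof.
move=> HN; elim=> [|j IH] Ss hj hSs h.
  by case: Ss hSs h => [|S [|]] // _; rewrite subn0 => /glift1_subE; exists 0.
have hk : 0 < k by lia.
have [Ss' [A [B ES]]] : exists Ss' A B, Ss = Ss' ++ [:: A; B].
  case/lastP: Ss hSs {h} => [|Ss1 B] //; case/lastP: Ss1 => [|Ss' A] // _.
  by exists Ss', A, B; rewrite -!cats1 -catA.
have hSs' : size Ss' = j by move: hSs; rewrite ES size_cat addn2 => -[].
have nthSs i (X : R -> Prop) Y : i < j -> nth X (Ss' ++ Y) i = nth X Ss' i.
  by move=> lt_ij; rewrite nth_cat hSs' lt_ij.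
rewrite ES -catA in h.
have hJ : size (Ss' ++ [:: mul_set A B]) = j.+1 by rewrite size_cat hSs' addn1.
have hmerge : Defs.subset (glift g ((Ss' ++ [:: mul_set A B]) ++ nseq (k - j) (sing oR)) N) Q.
  by rewrite -catA; exact: glift_merge_last.
have [i [hi hG]] := IH _ (ltnW hj) hJ hmerge.
case: (ltngtP i j) hi => [lt_ij _ | // | eq_ij _].
  by exists i; split; [lia | move: hG; rewrite ES !nthSs].
rewrite eq_ij nth_cat hSs' ltnn subnn /= in hG.
case: (cprime_two_sets HN hk (g1_sub_mul_set hk hG)) => [hA | hB].
  by exists j; split; [lia | rewrite ES nth_cat hSs' ltnn subnn].
by exists j.+1; split; [lia | rewrite ES nth_cat hSs' ltnNge leqnSn /= subSnn].
Qed.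

End ClassicalPrime.

Definition principal (r : R) : R -> Prop := fun t => exists s, t = g' (r :: s :: ones).

Lemma principal_self r : principal r r.
Proof. by exists oR; rewrite g'_one. Qed.

Lemma g'_cons_prod r ys : size ys = k.+1 -> g' (r :: ys) = g' (r :: g' (rcons ys oR) :: ones).
Proof.
move=> hys; rewrite -[LHS]g'_one -[_ :: nseq k.+1 oR]/([::] ++ _ :: nseq k.+1 oR).
by apply: (@g'_assoc _ _ _ [:: r]); rewrite /= ?size_rcons ?size_nseq ?hys ?cat_rcons.
Qed.

Lemma principal_mul r pre post t : size (pre ++ post) = k.+1 ->
  principal r t -> principal r (g' (pre ++ t :: post)).
Proof.
move=> hs [s ->]; set pp := pre ++ post.
have -> : g' (pre ++ g' (r :: s :: ones) :: post) = g' (g' (r :: s :: ones) :: pp).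
  apply: (kh_comm HR); first by move: hs; rewrite /pp !size_cat /=; lia.
  exact/Permutation_sym/Permutation_middle.
have hpp : 1 <= size pp by rewrite hs.
rewrite -[g' _ :: pp]/([::] ++ _ :: pp).
rewrite (@g'_assoc _ _ _ [:: r] (s :: ones ++ take 1 pp) (drop 1 pp)) /=.
- by rewrite g'_cons_prod /= ?size_drop ?hs ?subSS ?subn0 //; eexists.
- by rewrite -catA cat_take_drop.
- by rewrite size_nseq.
- by rewrite size_cat size_nseq (size_takel hpp) addn1.
- by rewrite hs.
- by rewrite size_drop hs subSS subn0 add1n.
Qed.

Lemma principal_f r xs z : all_in (nseq p.+2 (principal r)) xs -> f' xs z -> principal r z.
Proof.
move=> /all_in_nseqP [hs /Forall_image_map [ss Ess]].
have hss : size ss = p.+2 by rewrite -hs Ess size_map.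
have hpp : size ([:: r] ++ ones) = k.+1 by rewrite /= size_nseq.
rewrite Ess => /(g'_distr hpp hss z).2 [y [_ ->]].
by exists y.
Qed.

Lemma principal_inv r t y : principal r t -> is_inv p.+2 f' zR t y -> principal r y.
Proof.
move=> [s ->] hy; have [s' hs'] := is_inv_exists HGR s.
suff /(is_inv_uniq HGR hy) -> : is_inv p.+2 f' zR (g' (r :: s :: ones)) (g' (r :: s' :: ones)).
  by exists s'.
have rz : g' (r :: zR :: ones) = zR.
  by apply: (g'_zero (pre := [:: r])); rewrite /= size_nseq.
have hpp : size ([:: r] ++ ones) = k.+1 by rewrite /= size_nseq.
have hss : size (s :: s' :: nseq p zR) = p.+2 by rewrite /= size_nseq.
have hz : exists y, f' (s :: s' :: nseq p zR) y /\ zR = g' ([:: r] ++ y :: ones).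
  by exists zR; split; [exact/is_invE | rewrite rz].
by apply/is_invE; have := (g'_distr hpp hss zR).1 hz; rewrite /= map_nseq /= rz.
Qed.

Lemma principal_hyperideal r : hyperideal p.+2 k.+2 f' g' (principal r).
Proof.
split; last by move=> pre post x; rewrite subSS subn0; exact: principal_mul.
apply: (subhypergroup_of_closed HGR _ _ (principal_self r)).
  by move=> xs hxs z; exact: principal_f.
by move=> x y; exact: principal_inv.
Qed.

Definition colon (Q : M -> Prop) (Is : seq (R -> Prop)) : M -> Prop :=
  fun x => forall ts, all_in Is ts -> Defs.subset (g ts x) Q.

Section Colon.
Variables (Q : M -> Prop) (Is : seq (R -> Prop)).
Hypotheses (HQ : subhypermodule p.+2 k.+2 f g Q) (hIs : size Is = k.+1).
Hypothesis last_ideal : hyperideal p.+2 k.+2 f' g' (nth (fun _ => True) Is k).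

(* g(t_1^{n-1}, g(s_1^{n-1}, x)) = g(t_1^{n-2}, g'(t_{n-1}, s_1^{n-1}), x), and the
   last hyperideal absorbs the product. *)
Lemma colon_g ss x w : colon Q Is x -> size ss = k.+1 -> g ss x w -> colon Q Is w.
Proof.
move=> Cx hss hw ts hts v hv.
have hts_s : size ts = k.+1 by rewrite (all_in_size hts).
have E : take k ts ++ (drop k ts ++ ss) ++ [::] = ts ++ ss.
  by rewrite cats0 catA cat_take_drop.
have [_ /(_ (ex_intro _ w (conj hw hv)))] := g_assoc x v E hts_s
  (ltac:(by rewrite size_takel ?hts_s // addn0))
  (ltac:(by rewrite size_cat size_drop hts_s hss subSnn)).
apply: Cx; have [h1 h2] := all_in_take_drop k hts.
rewrite -(cat_take_drop k Is); apply: all_in_cat => //.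
rewrite (drop_last_nth (fun _ => True) hIs) (drop_last_nth zR hts_s) in h2 *.
move: h2 => /= [ht _]; split => //.
by apply: (last_ideal.2 [::]); rewrite // hss subSS subn0.
Qed.

Lemma colon_subhypermodule : subhypermodule p.+2 k.+2 f g (colon Q Is).
Proof.
split; last by move=> rs x w; rewrite subSS subn0 => hs Cx; exact: colon_g.
have C0 : colon Q Is zM.
  move=> ts /all_in_size; rewrite hIs => hs w /(g_zero _ hs) ->.
  exact: subhypermodule_zero.
have Cf xs : all_in (nseq p.+2 (colon Q Is)) xs -> Defs.subset (f xs) (colon Q Is).
  move=> /all_in_nseqP [hs hC] z hz ts hts.
  have hts_s : size ts = k.+1 by rewrite (all_in_size hts).
  exact (g_sub_f HQ hts_s hs (List.Forall_impl _ (fun x (Cx : colon Q Is x) => Cx ts hts) hC) hz).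
have Cinv x y : colon Q Is x -> is_inv p.+2 f zM x y -> colon Q Is y.
  have [u neg_u] := g_neg => Cx /neg_u; apply: colon_g Cx _.
  by rewrite /= size_nseq.
exact (subhypergroup_of_closed HGM Cf Cinv C0).
Qed.

End Colon.

Lemma g_sub_mul_scalar Q pre post r s a : subhypermodule p.+2 k.+2 f g Q ->
  size (pre ++ post) = k -> Defs.subset (g (pre ++ r :: post) a) Q ->
  Defs.subset (g (pre ++ g' (r :: s :: ones) :: post) a) Q.
Proof.
move=> HQ hs h w hw.
have to_front t x v : g (pre ++ t :: post) x v <-> g (t :: pre ++ post) x v.
  apply: g_perm; last exact/Permutation_sym/Permutation_middle.
  by rewrite size_cat /= addnS -size_cat hs.
have [y [hy hw']] := (g_mul_head _ _ _ _ hs).1 ((to_front _ _ _).1 hw).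
by apply: (subhypermodule_g HQ (x := y)) hw'; [rewrite /= size_nseq | exact/h/to_front].
Qed.

Lemma colon_principal Q rs a : subhypermodule p.+2 k.+2 f g Q -> size rs = k.+1 ->
  Defs.subset (g rs a) Q -> colon Q (map principal rs) a.
Proof.
move=> HQ hrs h ts.
suff gen rs' pre ts' : size (pre ++ rs') = k.+1 -> Defs.subset (g (pre ++ rs') a) Q ->
    all_in (map principal rs') ts' -> Defs.subset (g (pre ++ ts') a) Q.
  exact: (gen rs [::] ts hrs h).
elim: rs' pre ts' => [|r rs' IH] pre [|t ts'] //= hs hpre [[s ->] hts'].
have hs' : size (pre ++ rs') = k by move: hs; rewrite !size_cat /= addnS => -[].
rewrite -cat_rcons; apply: IH hts'; rewrite cat_rcons.
  by rewrite size_cat /= addnS -size_cat hs'.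
exact: g_sub_mul_scalar HQ hs' hpre.
Qed.

Lemma hyperideal_zero I : hyperideal p.+2 k.+2 f' g' I -> I zR.
Proof.
move=> [[[x Ix] _] absorb].
have := absorb [:: zR] ones x; rewrite subSS subn0 /= size_nseq => /(_ erefl Ix).
by rewrite (g'_zero (pre := [::])) //= size_nseq.
Qed.

Lemma glift_zero Is N : size Is = k.+1 ->
  (forall i, i < size Is -> hyperideal p.+2 k.+2 f' g' (nth (fun _ => True) Is i)) ->
  N zM -> glift g Is N zM.
Proof.
move=> hIs hI N0; exists (nseq (size Is) zR), zM; split.
  by apply: (all_in_const (A0 := fun _ => True)) => i /hI /hyperideal_zero.
by split => //; apply/g_zero; rewrite ?size_nseq.
Qed.

Lemma hlift_f2_l X Y x : X x -> Y zM -> hlift f (X :: Y :: nseq p (sing zM)) x.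
Proof.
move=> Xx Y0; exists (x :: zM :: nseq p zM); split; last exact: (f_zero_r HGM x).
by do 2!split => //; exact: all_in_nseq_sing.
Qed.

Lemma hlift_f2_r X Y y : X zM -> Y y -> hlift f (X :: Y :: nseq p (sing zM)) y.
Proof.
move=> X0 Yy; exists (zM :: y :: nseq p zM); split; last exact: (f_zero_l HGM y).
by do 2!split => //; exact: all_in_nseq_sing.
Qed.

Definition prime_avoidance (Q : M -> Prop) :=
  forall (Is : seq (R -> Prop)) (N1 N2 : M -> Prop), size Is = k.+1 ->
  (forall i, i < k.+1 -> hyperideal p.+2 k.+2 f' g' (nth (fun _ => True) Is i)) ->
  subhypermodule p.+2 k.+2 f g N1 -> subhypermodule p.+2 k.+2 f g N2 ->
  (forall i, i < k.+1 ->
     exists z, hlift f (N1 :: glift g (nth (fun _ => True) Is i :: nseq k (sing oR)) N2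
                       :: nseq p (sing zM)) z /\ ~ Q z) ->
  exists z, hlift f (N1 :: glift g Is N2 :: nseq p (sing zM)) z /\ ~ Q z.

Lemma cprime_avoidance Q : subhypermodule p.+2 k.+2 f g Q -> cprime Q -> prime_avoidance Q.
Proof.
move=> HQ CP Is N1 N2 hIs hI HN1 HN2 hcond; apply/exists_not_subset => hsub.
have Is0 : glift g Is N2 zM.
  by apply: (glift_zero hIs _ (subhypermodule_zero HN2)); rewrite hIs.
have N1Q : Defs.subset N1 Q := fun x Nx => hsub x (hlift_f2_l Nx Is0).
have IsQ : Defs.subset (glift g (Is ++ nseq (k - k) (sing oR)) N2) Q.
  by rewrite subnn cats0 => y hy; apply: hsub (hlift_f2_r (subhypermodule_zero HN1) hy).
have [i [hi iQ]] := cprime_sets HQ CP HN2 (leqnn k) hIs IsQ.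
have /exists_not_subset := hcond i hi; apply.
move=> z; apply: (subhypermodule_hlift_f2 HQ N1Q); exact/glift1_subE.
Qed.

Lemma avoidance_cprime Q : subhypermodule p.+2 k.+2 f g Q -> prime_avoidance Q -> cprime Q.
Proof.
move=> HQ PA rs a hrs aQ; apply: NNPP => hno.
set Is := map principal rs.
have hIs : size Is = k.+1 by rewrite size_map.
have nthIs i : i < k.+1 -> nth (fun _ => True) Is i = principal (nth oR rs i).
  by move=> hi; rewrite (nth_map oR) ?hrs.
have Iideal i : i < k.+1 -> hyperideal p.+2 k.+2 f' g' (nth (fun _ => True) Is i).
  by move=> /nthIs ->; exact: principal_hyperideal.
have HC := colon_subhypermodule HQ hIs (Iideal k (ltnSn k)).
have hcond i : i < k.+1 ->
    exists z, hlift f (Q :: glift g (nth (fun _ => True) Is i :: nseq k (sing oR)) (colon Q Is)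
                      :: nseq p (sing zM)) z /\ ~ Q z.
  move=> hi; have /exists_not_subset [w [hw nQw]] : ~ Defs.subset (g (nth oR rs i :: ones) a) Q.
    by move=> iQ; apply: hno; exists i.
  exists w; split => //; apply: hlift_f2_r (subhypermodule_zero HQ) _.
  exists (nth oR rs i :: ones), a; split; first split.
  - by rewrite nthIs //; exact: principal_self.
  - exact: all_in_nseq_sing.
  - by split => //; exact: colon_principal.
have [z [hz nQz]] := PA Is Q (colon Q Is) hIs Iideal HQ HC hcond.
apply/nQz/(subhypermodule_hlift_f2 HQ _ _ hz) => // y [ts [x [hts [Cx hy]]]].
exact: Cx _ hts _ hy.
Qed.

End Hypermodule.

Theorem mainTheorem1 (m n : nat) (hm : 2 <= m) (hn : 2 <= n)
  (R : Type) (f' : hop R) (g' : seq R -> R) (zR oR : R)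
  (M : Type) (f : hop M) (g : seq R -> M -> M -> Prop) (zM : M)
  (HR : krasner_hyperring m n f' g' zR oR)
  (HM : hypermodule m n f' g' zR oR f g zM)
  (Q : M -> Prop) (HQ : subhypermodule m n f g Q) (HQp : hproper Q) :
  let S := fun x => ~ Q x in
  classical_prime m n f g oR Q <->
  (forall (Is : seq (R -> Prop)) (N1 N2 : M -> Prop),
     size Is = (n - 1)%N ->
     (forall i, i < n - 1 -> hyperideal m n f' g' (nth (fun _ => True) Is i)) ->
     subhypermodule m n f g N1 -> subhypermodule m n f g N2 ->
     (forall i, i < n - 1 ->
        exists z, hlift f (N1 :: glift g (nth (fun _ => True) Is i :: nseq (n - 2) (sing oR)) N2
                              :: nseq (m - 2) (sing zM)) z /\ S z) ->
     exists z, hlift f (N1 :: glift g Is N2 :: nseq (m - 2) (sing zM)) z /\ S z).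
Proof.
move: hm hn HR HM HQ HQp.
case: m => [|[|p]] // _; case: n => [|[|k]] // _ HR HM HQ HQp S.
rewrite /S /classical_prime !subSS !subn0.
split=> [[_ [_ CP]] | PA]; first exact: (cprime_avoidance HR HM HQ CP).
by do 2!split => //; exact: (avoidance_cprime HR HM HQ PA).
Qed.
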